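(* Let $p$ and $q$ be two distinct odd primes and let $\delta$ be a positive divisor of $\lambda(pq)$. Then $$\sum_{\substack{a\in U_{pq}\\ \mathrm{ind}_{pq}(a)=\delta}}a\equiv \mu\big((\delta,p-1)\big)\, I\!\left(\Big(\frac{\delta}{(\delta,p-1)},\,p-1\Big)\right)\frac{\phi(\delta)}{\phi((\delta,p-1))}\pmod p.$$
   Context: $U_m$ denotes the set of invertible residue classes in $\mathbb{Z}/m\mathbb{Z}$ (the sum runs over one representative of each such class). For $a$ coprime to $m$, $\mathrm{ind}_m(a)$ is the multiplicative order of $a$ modulo $m$. $\lambda(m)$ is the Carmichael function: the smallest $k>0$ such that $a^k\equiv 1\pmod m$ for all $a\in U_m$. $\mu$ is the Möbius function, $\phi$ Euler's totient function, $(x,y)$ the greatest common divisor, and $I(n)=\lfloor 1/n\rfloor$ for positive integers $n$ (so $I(1)=1$ and $I(n)=0$ for $n>1$). *)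

From mathcomp Require Import all_boot all_order all_algebra all_solvable.
Set Implicit Arguments. Unset Strict Implicit. Unset Printing Implicit Defensive.

(* ind_m(a): multiplicative order of a modulo m, i.e. the least k > 0 with
   a^k = 1 (mod m).  (For a not coprime to m it is an irrelevant dummy value.) *)
Definition ind_pred (m a : nat) : pred nat :=
  fun k => (0 < k) && (coprime a m ==> (a ^ k == 1 %[mod m])).

Lemma ind_ex (m a : nat) : exists k, ind_pred m a k.
Proof.
case: m => [|m].
  exists 1; rewrite /ind_pred /= /coprime gcdn0 expn1 !modn0.
  by case: (a == 1).
exists (totient m.+1); rewrite /ind_pred totient_gt0 /=.
by apply/implyP => co; apply/eqP; apply: Euler_exp_totient.
Qed.

Definition ind (m a : nat) : nat := ex_minn (ind_ex m a).

Definition carmichael_pred (m : nat) : pred nat :=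
  fun k => (0 < k) && [forall a : 'I_m, coprime a m ==> (a ^ k == 1 %[mod m])].

Lemma carmichael_ex (m : nat) : exists k, carmichael_pred m k.
Proof.
case: m => [|m].
  by exists 1; rewrite /carmichael_pred /=; apply/forallP => -[].
exists (totient m.+1); rewrite /carmichael_pred totient_gt0 /=.
by apply/forallP => a; apply/implyP => co; apply/eqP; apply: Euler_exp_totient.
Qed.

Definition carmichael (m : nat) : nat := ex_minn (carmichael_ex m).

Definition squarefree (n : nat) : bool := all (fun p => logn p n == 1) (primes n).

Definition mobius (n : nat) : int :=
  if (0 < n) && squarefree n then ((-1) ^+ size (primes n))%R else 0%R.

Definition Ifl (n : nat) : nat := 1 %/ n.

From mathcomp Require Import all_boot all_order all_algebra all_solvable.
Import GRing.Theory.
Set Implicit Arguments. Unset Strict Implicit. Unset Printing Implicit Defensive.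

(* Let G(m, n) be the sum of the units a mod m with a^n = 1 and F(m, d) the sum
   of those of order d, so that G(m, n) = sum_{d | n} F(m, d).  Modulo p, the
   Chinese remainder theorem factors G(pq, n) as the sum of the n-th roots of
   unity mod p times the number of n-th roots of unity mod q.  The first factor
   is 1 when (n, p-1) = 1 and 0 otherwise, since a root z <> 1 satisfies
   z S = S; in the first case n | lambda(pq) | (p-1)(q-1) forces n | q-1, so the
   second factor is n.  The arithmetic function mu(d_pi) phi(d_pi'), where pi is
   the set of primes dividing p-1, has the same divisor sums
   [(n, p-1) = 1] n, so Moebius inversion over the divisors of delta identifies
   F(pq, delta) mod p with it, and it equals the right-hand side. *)

Lemma expn_mod_eq1M m a i j : a ^ i = 1 %[mod m] -> a ^ (i * j) = 1 %[mod m].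
Proof. by move=> ai1; rewrite expnM -modnXm ai1 modnXm exp1n. Qed.

Lemma ind_gt0 m a : 0 < ind m a.
Proof. by rewrite /ind; case: ex_minnP => k /andP[]. Qed.

Lemma ind_dvdn m a k : coprime a m -> (ind m a %| k) = (a ^ k == 1 %[mod m]).
Proof.
move=> am; rewrite /ind; case: ex_minnP => i /andP[i_gt0 /implyP/(_ am)/eqP ai1] i_min.
apply/idP/idP => [/dvdnP[j ->] | /eqP ak1]; first by rewrite mulnC expn_mod_eq1M.
apply: contraT; rewrite /dvdn -lt0n => ki_gt0.
have: ind_pred m a (k %% i).
  apply/andP; split=> //; apply/implyP=> _.
  move: ak1; rewrite {1}(divn_eq k i) expnD -modnMml (mulnC (k %/ i)) (expn_mod_eq1M _ ai1).
  by rewrite modnMml mul1n => ->.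
by move/i_min; rewrite leqNgt ltn_mod i_gt0.
Qed.

Lemma expn_mod_inj m g i j : coprime g m ->
  i < ind m g -> j < ind m g -> g ^ i = g ^ j %[mod m] -> i = j.
Proof.
move=> gm; wlog le_ij : i j / i <= j => [wlog_ij|] ilt jlt gij.
  by case: (leqP i j) => [|/ltnW] ij; [apply: wlog_ij | apply/esym/wlog_ij].
have: ind m g %| j + (ind m g - i).
  by rewrite ind_dvdn // expnD -modnMml -gij modnMml -expnD (subnKC (ltnW ilt)) -ind_dvdn.
rewrite (addnBCA le_ij (ltnW ilt)) (dvdn_addr _ (dvdnn _)) /dvdn modn_small.
  by rewrite subn_eq0 => ji; apply/eqP; rewrite eqn_leq le_ij.
exact: leq_ltn_trans (leq_subr _ _) jlt.
Qed.

Lemma carmichael_dvdn m k :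
  0 < k -> (forall a, coprime a m -> a ^ k = 1 %[mod m]) -> carmichael m %| k.
Proof.
move=> k_gt0 ak1; rewrite /carmichael; case: ex_minnP => c /andP[c_gt0 /forallP ac1] c_min.
apply/gcdn_idPl/eqP; rewrite eqn_leq dvdn_leq ?dvdn_gcdl ?gcdn_gt0 ?c_gt0 //=.
apply: c_min; rewrite /carmichael_pred gcdn_gt0 c_gt0; apply/forallP => a.
apply/implyP => am; rewrite -ind_dvdn // dvdn_gcd !ind_dvdn // (implyP (ac1 a)) //=.
by rewrite ak1.
Qed.

Lemma carmichaelM_dvdn_lcm p q : 0 < p -> 0 < q -> coprime p q ->
  carmichael (p * q) %| lcmn (totient p) (totient q).
Proof.
move=> p_gt0 q_gt0 pq; apply: carmichael_dvdn => [|a].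
  by rewrite lcmn_gt0 !totient_gt0 p_gt0.
rewrite coprimeMr => /andP[ap aq]; apply/eqP; rewrite chinese_remainder //.
rewrite -!ind_dvdn // (dvdn_trans _ (dvdn_lcml _ _)) ?(dvdn_trans _ (dvdn_lcmr _ _)) //.
  by rewrite ind_dvdn ?Euler_exp_totient.
by rewrite ind_dvdn ?Euler_exp_totient.
Qed.

Definition unit_root (m n a : nat) : bool := coprime a m && (a ^ n == 1 %[mod m]).

Lemma unit_root_modn m n a : unit_root m n (a %% m) = unit_root m n a.
Proof. by rewrite /unit_root coprime_modl modnXm. Qed.

Lemma unit_rootM p q n a : coprime p q ->
  unit_root (p * q) n a = unit_root p n a && unit_root q n a.
Proof. by move=> pq; rewrite /unit_root coprimeMr chinese_remainder // andbACA. Qed.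

Lemma unit_rootMl m n z a : unit_root m n z -> unit_root m n (z * a) = unit_root m n a.
Proof.
case/andP=> zm /eqP zn1; rewrite /unit_root coprimeMl zm expnMn.
by rewrite -modnMml zn1 modnMml mul1n.
Qed.

Lemma unit_root_eq1 m n a : coprime n (totient m) -> unit_root m n a -> a = 1 %[mod m].
Proof.
move=> n_tot /andP[am an1]; apply/eqP; rewrite -{1}(expn1 a) -ind_dvdn //.
by rewrite -(eqP n_tot) dvdn_gcd !ind_dvdn // an1; apply/eqP; apply: Euler_exp_totient.
Qed.

Lemma primitive_root_mod_prime p : prime p -> exists2 g, coprime g p & ind p g = p.-1.
Proof.
move=> p_pr; have p_gt1 := prime_gt1 p_pr.
have [u defU] := cyclicP (units_Zp_cyclic p_pr).
set x := FinRing.uval u; set g : nat := val x.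
have gp : coprime g p by rewrite coprime_sym -unitZpE // natr_Zp (valP u).
exists g => //.
have ord_g k : (p.-1 %| k) = (g ^ k == 1 %[mod p]).
  have <- : fingroup.order u = p.-1.
    by rewrite /fingroup.order -defU card_units_Zp ?prime_gt0 // totient_prime.
  rewrite order_dvdn -(inj_eq val_inj) /= FinRing.val_unitX.
  have -> : (x ^+ k = (g ^ k)%:R)%R by rewrite natrX natr_Zp.
  by rewrite -(mulr1n 1%R) -(inj_eq val_inj) /= !val_Zp_nat // Zp_cast.
by apply/eqP; rewrite eqn_dvd ind_dvdn // -ord_g dvdnn /= ord_g -ind_dvdn.
Qed.

Lemma card_dvdn_ord N m : 0 < m -> m %| N -> #|[pred k : 'I_N | m %| k]| = N %/ m.
Proof.
move=> m_gt0 /dvdnP[n ->]; rewrite mulnK //.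
have lt_jm (j : 'I_n) : j * m < n * m by rewrite ltn_pmul2r.
pose f (j : 'I_n) : 'I_(n * m) := Ordinal (lt_jm j).
have f_inj : injective f.
  by move=> i j /(congr1 val)/eqP; rewrite /= eqn_pmul2r // => /eqP/val_inj.
rewrite -[RHS](card_ord n) -(card_imset _ f_inj); apply: eq_card => k.
rewrite inE; apply/idP/imsetP => [/dvdnP[j def_k] | [j _ ->]]; last by rewrite dvdn_mull.
have lt_jn : j < n by rewrite -(ltn_pmul2r m_gt0) -def_k.
by exists (Ordinal lt_jn) => //; apply: val_inj.
Qed.

Lemma card_coprime_ord n : #|[pred a : 'I_n | coprime a n]| = totient n.
Proof.
rewrite totient_count_coprime big_mkord -sum1_card big_mkcond /=.
by apply: eq_bigr => a _; rewrite inE coprime_sym; case: (coprime n a).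
Qed.

Lemma card_unit_roots_mod_prime p n : prime p -> n %| p.-1 ->
  #|[pred a : 'I_p | unit_root p n a]| = n.
Proof.
move=> p_pr n_dvd; have p_gt0 := prime_gt0 p_pr.
have [g gp ind_g] := primitive_root_mod_prime p_pr.
set Q := p.-1 in n_dvd ind_g.
have Q_gt0 : 0 < Q by rewrite -ind_g ind_gt0.
have n_gt0 : 0 < n := dvdn_gt0 Q_gt0 n_dvd.
pose e (k : 'I_Q) : 'I_p := Ordinal (ltn_pmod (g ^ k) p_gt0).
have e_inj : injective e.
  by move=> i j /(congr1 val) /= gij; apply/val_inj/(expn_mod_inj gp _ _ gij); rewrite ind_g.
have e_onto : [set e k | k in 'I_Q] = [set a : 'I_p | coprime a p].
  apply/eqP; rewrite eqEcard; apply/andP; split.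
    by apply/subsetP => _ /imsetP[k _ ->]; rewrite inE /= coprime_modl coprimeXl.
  by rewrite card_imset // card_ord cardsE card_coprime_ord totient_prime.
have root_e k : unit_root p n (e k) = (Q %/ n %| k).
  rewrite /= unit_root_modn /unit_root coprimeXl //= -expnM -ind_dvdn ?coprimeXl //.
  by rewrite ind_g -[Q %/ n %| k](dvdn_pmul2r n_gt0) divnK.
have QnK : Q %/ (Q %/ n) = n by rewrite divnA // mulKn.
have Qn_gt0 : 0 < Q %/ n by rewrite divn_gt0 // dvdn_leq.
rewrite -[RHS]QnK -(card_dvdn_ord Qn_gt0 (dvdn_div n_dvd)).
rewrite -(card_imset _ e_inj); apply: eq_card => a; rewrite inE.
apply/idP/imsetP => [a_root | [k k_dvd ->]]; last by rewrite root_e.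
have: a \in [set a : 'I_p | coprime a p] by rewrite inE; case/andP: a_root.
by rewrite -e_onto => /imsetP[k _ def_a]; exists k; rewrite // inE -root_e -def_a.
Qed.

Lemma nontrivial_unit_root_mod_prime p n : prime p -> 0 < n -> ~~ coprime n p.-1 ->
  exists2 z, unit_root p n z & z != 1 %[mod p].
Proof.
move=> p_pr n_gt0 n_P; have [g gp ind_g] := primitive_root_mod_prime p_pr.
have P_gt0 : 0 < p.-1 by rewrite -ind_g ind_gt0.
have nP_gt1 : 1 < gcdn n p.-1 by rewrite ltn_neqAle eq_sym n_P gcdn_gt0 n_gt0.
set l := pdiv (gcdn n p.-1).
have l_gt1 : 1 < l by rewrite prime_gt1 ?pdiv_prime.
have l_n : l %| n := dvdn_trans (pdiv_dvd _) (dvdn_gcdl _ _).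
have l_P : l %| p.-1 := dvdn_trans (pdiv_dvd _) (dvdn_gcdr _ _).
exists (g ^ (p.-1 %/ l)).
  by rewrite /unit_root coprimeXl //= -expnM -ind_dvdn ?ind_g // -{1}(divnK l_P) dvdn_mul.
have Pl_gt0 : 0 < p.-1 %/ l by rewrite divn_gt0 (ltnW l_gt1, dvdn_leq P_gt0 l_P).
rewrite -ind_dvdn // ind_g; apply: contraL (ltn_Pdiv l_gt1 P_gt0).
by move/(dvdn_leq Pl_gt0) => le_P; rewrite ltnNge le_P.
Qed.

Lemma Fp_nat_eq p a b : prime p -> (a%:R == b%:R :> 'F_p)%R = (a == b %[mod p]).
Proof. by move=> p_pr; rewrite -(inj_eq val_inj) /= !val_Fp_nat. Qed.

Lemma sum_unit_roots_mod_prime p n : prime p -> 0 < n ->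
  (\sum_(a < p | unit_root p n a) a%:R = (coprime n p.-1)%:R :> 'F_p)%R.
Proof.
move=> p_pr n_gt0; have p_gt1 := prime_gt1 p_pr; have p_gt0 := ltnW p_gt1.
have [n_P | n_P] := boolP (coprime n p.-1).
  rewrite (big_pred1 (Ordinal p_gt1)) // => a /=; apply/idP/eqP => [a_root | ->].
    apply: val_inj; rewrite /= -(modn_small (ltn_ord a)) -(modn_small p_gt1).
    by apply: unit_root_eq1 a_root; rewrite totient_prime.
  by rewrite /unit_root coprime1n exp1n eqxx.
have [z z_root z_ne1] := nontrivial_unit_root_mod_prime p_pr n_gt0 n_P.
have z_neq0 : (z%:R != 0 :> 'F_p)%R.
  rewrite -(mulr0n 1%R) Fp_nat_eq // mod0n -/(dvdn _ _) -prime_coprime // coprime_sym.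
  by case/andP: z_root.
pose mz (a : 'I_p) : 'I_p := Ordinal (ltn_pmod (z * a) p_gt0).
have mzE a : ((mz a)%:R = z%:R * a%:R :> 'F_p)%R by rewrite /= Fp_nat_mod // natrM.
have mz_inj : injective mz.
  move=> a b /(congr1 (fun c : 'I_p => c%:R : 'F_p)%R); rewrite !mzE => /(mulfI z_neq0)/eqP.
  by rewrite Fp_nat_eq // !modn_small // => /eqP/val_inj.
set S := (\sum_(a < p | _) _)%R.
have S_eq : (S = z%:R * S)%R.
  rewrite [LHS](reindex_inj mz_inj) mulr_sumr /=.
  apply: eq_big => a; first by rewrite unit_root_modn unit_rootMl.
  by rewrite mzE.
apply/eqP; move/eqP: S_eq; rewrite -subr_eq0 -{1}(mul1r S) -mulrBl mulf_eq0.
by rewrite subr_eq0 eq_sym -(mulr1n 1%R) Fp_nat_eq // (negbTE z_ne1).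
Qed.

Lemma sum_chinese (R : zmodType) p q (P Q : pred nat) (F : nat -> R) :
  0 < p -> 0 < q -> coprime p q ->
  (\sum_(a < p * q | P (a %% p)%N && Q (a %% q)%N) F (a %% p)%N
    = (\sum_(x < p | P x) F x) *+ #|[pred y : 'I_q | Q y]|)%R.
Proof.
move=> p_gt0 q_gt0 pq.
pose k (a : 'I_(p * q)) : 'I_p * 'I_q :=
  (Ordinal (ltn_pmod a p_gt0), Ordinal (ltn_pmod a q_gt0)).
have k_inj : injective k.
  move=> a b /(congr1 (fun u => (val u.1, val u.2))) [ab_p ab_q]; apply/ord_inj/eqP.
  rewrite -(modn_small (ltn_ord a)) -(modn_small (ltn_ord b)).
  by rewrite chinese_remainder // ab_p ab_q !eqxx.
have [h kK hK] : bijective k by apply: inj_card_bij; rewrite // card_prod !card_ord.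
have h_mod u : (h u %% p = u.1) * (h u %% q = u.2) by rewrite -{2 4}[u]hK.
rewrite (reindex h) /=; last by apply: onW_bij; exists k.
rewrite (eq_bigl (fun u : 'I_p * 'I_q => P u.1 && Q u.2)) => [|u]; last by rewrite !h_mod.
under eq_bigr do rewrite h_mod.
rewrite -(pair_big_dep (fun x : 'I_p => P x) (fun _ (y : 'I_q) => Q y) (fun x _ => F x)).
rewrite /= -sumrMnl.
by apply: eq_bigr => x _; rewrite sumr_const.
Qed.

Definition roots_sum (m n : nat) : nat := \sum_(a < m | unit_root m n a) a.

Definition ind_sum (m d : nat) : nat := \sum_(a < m | coprime a m && (ind m a == d)) a.

Lemma roots_sum_ind_sum m n :
  0 < n -> roots_sum m n = \sum_(d < n.+1 | d %| n) ind_sum m d.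
Proof.
move=> n_gt0; rewrite /roots_sum /ind_sum.
have root_ind (a : 'I_m) : unit_root m n a = coprime a m && (ind m a %| n).
  by rewrite /unit_root; case: (boolP (coprime a m)) => //= am; rewrite ind_dvdn.
have ind_le a : ind m a %| n -> ind m a < n.+1 by move/(dvdn_leq n_gt0).
rewrite (eq_bigl _ _ root_ind).
rewrite (partition_big (fun a : 'I_m => inord (ind m a) : 'I_n.+1) (fun d => d %| n)).
  apply: eq_bigr => d d_n; apply: eq_bigl => a.
  have [a_n | a_n] := boolP (ind m a %| n).
    by rewrite andbT -(inj_eq val_inj) /= inordK ?ind_le.
  by rewrite andbF /=; apply/esym/negbTE; apply: contra a_n => /andP[_ /eqP ->].
by move=> a /andP[_ a_n]; rewrite inordK ?ind_le.
Qed.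

Lemma roots_sum_mod_pq p q n : prime p -> 0 < q -> coprime p q ->
  ((roots_sum (p * q) n)%:R
    = (\sum_(a < p | unit_root p n a) a%:R) *+ #|[pred b : 'I_q | unit_root q n b]| :> 'F_p)%R.
Proof.
move=> p_pr q_gt0 pq; rewrite /roots_sum natr_sum.
rewrite (eq_bigl (fun a : 'I_(p * q) => unit_root p n (a %% p) && unit_root q n (a %% q))).
  by under eq_bigr do rewrite -Fp_nat_mod //; rewrite sum_chinese // prime_gt0.
by move=> a; rewrite unit_rootM // !unit_root_modn.
Qed.

Lemma roots_sum_mod_p p q n : prime p -> prime q -> p != q ->
  0 < n -> n %| carmichael (p * q) ->
  ((roots_sum (p * q) n)%:R = (if coprime n p.-1 then n else 0%N)%:R :> 'F_p)%R.
Proof.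
move=> p_pr q_pr pq n_gt0 n_dvd.
have co_pq : coprime p q by rewrite prime_coprime // dvdn_prime2.
rewrite roots_sum_mod_pq ?prime_gt0 // sum_unit_roots_mod_prime //.
have [nP | nP] /= := boolP (coprime n p.-1); last by rewrite mul0rn.
have n_Q : n %| q.-1.
  rewrite -(Gauss_dvdr _ nP) (dvdn_trans n_dvd) //.
  rewrite (dvdn_trans (carmichaelM_dvdn_lcm (prime_gt0 p_pr) (prime_gt0 q_pr) co_pq)) //.
  by rewrite !totient_prime // dvdn_lcm dvdn_mulr ?dvdn_mull.
by rewrite mulr1n card_unit_roots_mod_prime.
Qed.

Lemma mobius_primeM l a : prime l -> 0 < a -> ~~ (l %| a) -> mobius (l * a) = (- mobius a)%R.
Proof.
move=> l_pr a_gt0 l_a; have l_gt0 := prime_gt0 l_pr.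
have la_gt0 : 0 < l * a by rewrite muln_gt0 l_gt0.
have primes_la : primes (l * a) =i l :: primes a.
  by move=> r; rewrite primesM // primes_prime // !inE.
have l_notin : l \notin primes a by rewrite mem_primes l_pr a_gt0.
have size_la : size (primes (l * a)) = (size (primes a)).+1.
  have := uniq_size_uniq (primes_uniq (l * a)) primes_la.
  by rewrite /= l_notin primes_uniq => /esym/eqP.
have sqf_la : squarefree (l * a) = squarefree a.
  rewrite /squarefree (eq_all_r primes_la) /= lognM // logn_prime // eqxx.
  rewrite logn_coprime ?prime_coprime // addn0 /=.
  apply: eq_in_all => r r_a; rewrite lognM // logn_prime //.
  by have /negbTE -> : r != l by apply: contraNneq l_notin => <-.
rewrite /mobius la_gt0 a_gt0 sqf_la size_la /=.
by case: (squarefree a); rewrite ?exprS ?mulN1r ?oppr0.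
Qed.

Lemma mobius_eq0 l a : prime l -> l ^ 2 %| a -> mobius a = 0%R.
Proof.
move=> l_pr l2_a; rewrite /mobius; case: (posnP a) => [-> //|a_gt0 /=].
suff /negbTE -> : ~~ squarefree a by [].
have l_a : l \in primes a.
  by rewrite mem_primes l_pr a_gt0 (dvdn_trans (dvdn_exp (isT : 0 < 2) (dvdnn l)) l2_a).
by apply/allPn; exists l => //; rewrite neq_ltn -pfactor_dvdn // l2_a orbT.
Qed.

Lemma sumr_sign_involution (R : numDomainType) (I : finType) (P : pred I) (F : I -> R)
    (s : I -> I) :
  involutive s -> (forall i, P (s i) = P i) -> (forall i, P i -> F (s i) = (- F i)%R) ->
  (\sum_(i | P i) F i = 0)%R.
Proof.
move=> sK Ps Fs; set S := (\sum_(i | P i) F i)%R.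
have S_opp : (S = - S)%R.
  rewrite [LHS](reindex_inj (inv_inj sK)) -sumrN.
  by apply: eq_big => i; rewrite Ps //; apply: Fs.
by apply/eqP; move/eqP: S_opp; rewrite -subr_eq0 opprK -mulr2n Num.Theory.mulrn_eq0.
Qed.

Lemma sum_dvdn_eq0 (R : numDomainType) (f : nat -> R) n l :
  0 < n -> prime l -> l %| n ->
  (forall d, 0 < d -> l ^ 2 %| d -> f d = 0%R) ->
  (forall e, 0 < e -> ~~ (l %| e) -> f (l * e) = (- f e)%R) ->
  (\sum_(d < n.+1 | (d %| n)%N) f d = 0)%R.
Proof.
move=> n_gt0 l_pr l_n f_l2 f_l; have l_gt0 := prime_gt0 l_pr.
have l2_dvd_l d : (l ^ 2 %| l * d) = (l %| d) by rewrite (expnS l 1) expn1 dvdn_pmul2l.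
rewrite (bigID (fun d : 'I_n.+1 => l ^ 2 %| d)) /= big1 ?add0r; last first.
  by move=> d /andP[d_n l2_d]; rewrite f_l2 ?(dvdn_gt0 n_gt0 d_n).
(* On the divisors not divisible by l^2, d <-> l d (l not dividing d) is a
   sign-reversing involution for f. *)
pose S d := (d %| n) && ~~ (l ^ 2 %| d).
pose sw d := if l %| d then d %/ l else l * d.
have swS d : S d -> [/\ S (sw d), sw (sw d) = d & f (sw d) = (- f d)%R].
  case/andP=> d_n l2_d; have d_gt0 := dvdn_gt0 n_gt0 d_n.
  case: (boolP (l %| d)) => [/dvdnP[v def_d] | l_d].
    have v_gt0 : 0 < v by move: d_gt0; rewrite def_d muln_gt0 => /andP[].
    have l_v : ~~ (l %| v) by rewrite -l2_dvd_l mulnC -def_d.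
    have -> : sw d = v by rewrite /sw def_d dvdn_mull // mulnK.
    have -> : sw v = d by rewrite /sw (negbTE l_v) def_d mulnC.
    split=> //; last by rewrite def_d mulnC f_l // opprK.
    rewrite /S (dvdn_trans _ d_n) ?def_d ?dvdn_mulr //=.
    by apply: contra l_v; apply: dvdn_trans; rewrite (expnS l 1) dvdn_mulr.
  have -> : sw d = l * d by rewrite /sw (negbTE l_d).
  have -> : sw (l * d) = d by rewrite /sw dvdn_mulr // mulKn.
  split=> //; last by rewrite f_l.
  by rewrite /S l2_dvd_l l_d Gauss_dvd ?prime_coprime // l_n d_n.
pose s (d : 'I_n.+1) : 'I_n.+1 := if S d then inord (sw d) else d.
have sE (d : 'I_n.+1) : S d -> s d = sw d :> nat.
  move=> Sd; rewrite /s Sd inordK // ltnS dvdn_leq //.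
  by case: (swS d Sd) => /andP[].
have sS (d : 'I_n.+1) : S (s d) = S d.
  have [Sd | /negbTE nSd] := boolP (S d); last by rewrite /s nSd.
  by rewrite sE //; case: (swS d Sd).
have sK : involutive s.
  move=> d; have [Sd | /negbTE nSd] := boolP (S d); last by rewrite /s !nSd.
  by apply: ord_inj; rewrite sE ?sS // sE //; case: (swS d Sd).
apply: (sumr_sign_involution sK) => [d | d Sd]; first exact: sS.
by rewrite sE //; case: (swS d Sd).
Qed.

Definition pi_mobius_totient (P d : nat) : int :=
  (mobius d`_(\pi(P)) * (totient d`_(\pi(P))^')%:Z)%R.

Section PiMobiusTotient.

Variable P : nat.
Hypothesis P_gt0 : 0 < P.

Lemma pi_mobius_totient_coprime d : 0 < d -> coprime d P -> pi_mobius_totient P d = totient d.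
Proof.
move=> d_gt0 dP; have d_pi' : (\pi(P))^'.-nat d by rewrite -coprime_pi' // coprime_sym.
rewrite /pi_mobius_totient (part_p'nat d_pi') (part_pnat_id d_pi').
by rewrite (_ : mobius 1 = 1%R) ?mul1r.
Qed.

Lemma pi_mobius_totient_eq0 l d : prime l -> l %| P -> 0 < d -> l ^ 2 %| d ->
  pi_mobius_totient P d = 0%R.
Proof.
move=> l_pr l_P d_gt0 l2_d; rewrite /pi_mobius_totient (@mobius_eq0 l) ?mul0r //.
have l2_pi : (\pi(P)).-nat (l ^ 2) by rewrite pnatX (pnatE _ l_pr) mem_primes l_pr P_gt0 l_P.
by rewrite -(Gauss_dvdl _ (pnat_coprime l2_pi (part_pnat _ d))) partnC.
Qed.

Lemma pi_mobius_totient_primeM l e : prime l -> l %| P -> 0 < e -> ~~ (l %| e) ->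
  pi_mobius_totient P (l * e) = (- pi_mobius_totient P e)%R.
Proof.
move=> l_pr l_P e_gt0 l_e.
have l_pi : (\pi(P)).-nat l by rewrite (pnatE _ l_pr) mem_primes l_pr P_gt0 l_P.
rewrite /pi_mobius_totient !(partnM _ (prime_gt0 l_pr) e_gt0) (part_pnat_id l_pi).
rewrite (@part_p'nat _ l) ?pnatNK // mul1n mobius_primeM ?mulNr //.
by apply: contra l_e => /dvdn_trans; apply; apply: dvdn_part.
Qed.

Lemma sum_pi_mobius_totient n : 0 < n ->
  (\sum_(d < n.+1 | (d %| n)%N) pi_mobius_totient P d
     = (if coprime n P then n else 0%N)%:Z)%R.
Proof.
move=> n_gt0; have [nP | nP] := boolP (coprime n P).
  rewrite -[in RHS](sum_totient_dvd n) -natz natr_sum; apply: eq_bigr => d d_n.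
  by rewrite natz pi_mobius_totient_coprime ?(dvdn_gt0 n_gt0) ?(coprime_dvdl d_n).
have nP_gt1 : 1 < gcdn n P by rewrite ltn_neqAle eq_sym nP gcdn_gt0 n_gt0.
have l_pr := pdiv_prime nP_gt1.
apply: (sum_dvdn_eq0 n_gt0 l_pr) => [|d d_gt0|e e_gt0 l_e].
- exact: dvdn_trans (pdiv_dvd _) (dvdn_gcdl _ _).
- exact: pi_mobius_totient_eq0 l_pr (dvdn_trans (pdiv_dvd _) (dvdn_gcdr _ _)) d_gt0.
- exact: pi_mobius_totient_primeM l_pr (dvdn_trans (pdiv_dvd _) (dvdn_gcdr _ _)) e_gt0 l_e.
Qed.

Lemma pi_mobius_totient_gcd d : 0 < d ->
  (mobius (gcdn d P) * (Ifl (gcdn (d %/ gcdn d P) P) * (totient d %/ totient (gcdn d P)))%:Z)%R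
  = pi_mobius_totient P d.
Proof.
move=> d_gt0; set g := gcdn d P; set e := d %/ g.
have g_gt0 : 0 < g by rewrite gcdn_gt0 d_gt0.
have def_d : d = e * g by rewrite divnK // dvdn_gcdl.
have e_gt0 : 0 < e by move: d_gt0; rewrite def_d muln_gt0 => /andP[].
have [eP | eP] := boolP (coprime e P); last first.
  have eP_gt1 : 1 < gcdn e P by rewrite ltn_neqAle eq_sym eP gcdn_gt0 e_gt0.
  have l_pr := pdiv_prime eP_gt1.
  have l_e : pdiv (gcdn e P) %| e := dvdn_trans (pdiv_dvd _) (dvdn_gcdl _ _).
  have l_P : pdiv (gcdn e P) %| P := dvdn_trans (pdiv_dvd _) (dvdn_gcdr _ _).
  have l_g : pdiv (gcdn e P) %| g by rewrite dvdn_gcd l_P andbT def_d dvdn_mulr.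
  rewrite /Ifl divn_small // mul0n mulr0 (pi_mobius_totient_eq0 l_pr l_P d_gt0) //.
  by rewrite def_d (expnS _ 1) expn1 mulnC dvdn_mul.
have g_pi : (\pi(P)).-nat g by apply: pnat_dvd (dvdn_gcdr d P) (pnat_pi P_gt0).
have e_pi' : (\pi(P))^'.-nat e by rewrite -coprime_pi' // coprime_sym.
rewrite (eqP eP) /Ifl divnn /= mul1n /pi_mobius_totient {2 3}def_d !partnM //.
rewrite (part_p'nat e_pi') (part_pnat_id g_pi) (part_pnat_id e_pi') part_p'nat ?pnatNK //.
rewrite mul1n muln1 def_d totient_coprime ?mulnK ?totient_gt0 //.
by rewrite (coprime_dvdr (dvdn_gcdr d P)).
Qed.

End PiMobiusTotient.

Lemma eq_from_dvdn_sums (R : zmodType) (F G : nat -> R) N : 0 < N ->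
  (forall n, n %| N ->
     (\sum_(d < n.+1 | (d %| n)%N) F d = \sum_(d < n.+1 | (d %| n)%N) G d)%R) ->
  F N = G N.
Proof.
move=> N_gt0 eq_sums; suff: forall n, n %| N -> F n = G n by apply.
elim/ltn_ind => n IH n_N; have := eq_sums n n_N.
rewrite [in LHS](bigD1 ord_max) ?dvdnn // [in RHS](bigD1 ord_max) ?dvdnn //=.
rewrite (eq_bigr (fun d : 'I_n.+1 => G d)) => [/addIr //|d].
case/andP=> d_n d_ne_n; apply: IH (dvdn_trans d_n n_N).
rewrite ltn_neqAle -ltnS ltn_ord andbT.
by apply: contra d_ne_n => /eqP d_eq_n; apply/eqP/ord_inj.
Qed.

Lemma eqz_mod_Fp p x y : prime p -> (x%:~R = y%:~R :> 'F_p)%R -> (x = y %[mod p])%Z.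
Proof.
move=> p_pr xy; apply/eqP; rewrite eqz_mod_dvd dvdzE.
have : ((x - y)%:~R = 0 :> 'F_p)%R by rewrite intrB xy subrr.
rewrite [X in (X%:~R)%R]intEsign intrM => /eqP; rewrite mulf_eq0 rmorph_sign signr_eq0 /=.
by rewrite -pmulrn -(mulr0n 1%R) Fp_nat_eq // mod0n.
Qed.

Theorem theorem1p9 (p q delta : nat) :
  prime p -> prime q -> p != q -> odd p -> odd q ->
  0 < delta -> delta %| carmichael (p * q) ->
  ((\sum_(a < p * q | coprime a (p * q) && (ind (p * q) a == delta)) a)%:Z
   = mobius (gcdn delta p.-1)
     * (Ifl (gcdn (delta %/ gcdn delta p.-1) p.-1)
        * (totient delta %/ totient (gcdn delta p.-1)))%:Z %[mod p])%Z.
Proof.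
move=> p_pr q_pr pq _ _ delta_gt0 delta_dvd.
have P_gt0 : 0 < p.-1 by rewrite -subn1 subn_gt0 prime_gt1.
rewrite pi_mobius_totient_gcd //; apply: (eqz_mod_Fp p_pr); rewrite -pmulrn.
apply: (@eq_from_dvdn_sums _ (fun d => (ind_sum (p * q) d)%:R : 'F_p)%R
                              (fun d => (pi_mobius_totient p.-1 d)%:~R)%R) => // n n_dvd.
have n_gt0 : 0 < n := dvdn_gt0 delta_gt0 n_dvd.
rewrite -natr_sum -roots_sum_ind_sum // roots_sum_mod_p ?(dvdn_trans n_dvd) //.
by rewrite -rmorph_sum sum_pi_mobius_totient // pmulrn.
Qed.
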